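(* Let $T=K[X,Y]$ be $\mathbb Z/n\mathbb Z$-graded by $\deg X=\overline1$, $\deg Y=\overline{-1}$, let $S=T/(X^{n-2}-Y^2)=\bigoplus_{\bar i\in\mathbb Z/n\mathbb Z}S_{\bar i}$ with the induced grading, and regard $S$ as an $R$-algebra via $x\mapsto \overline{XY}$. Let $S^{[n]}\subset M_n(S)$ be the $R$-subalgebra whose $(i,j)$ entry ranges over $S_{\overline{j-i}}$. Then there is an isomorphism of $R$-algebras $S^{[n]}\cong\Lambda$.
   Context: $K$ a field, $R=K[x]$, $n\ge3$. $\Lambda\subset M_n(K(x))$ is the $R$-order whose $(i,j)$ entry ranges over $x^{c_{ij}}R$, with $c_{ij}=0$ for $i\le j$ except $c_{1n}=-1$, $c_{ij}=1$ for $i=j+1$, $c_{ij}=2$ for $i\ge j+2$. *)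

From HB Require Import structures.
From mathcomp Require Import all_boot all_order all_algebra.
Set Implicit Arguments. Unset Strict Implicit. Unset Printing Implicit Defensive.
Import Order.TTheory GRing.Theory Num.Theory.
Local Open Scope ring_scope.

Notation "x %:F" := (@FracField.tofrac _ x) : ring_scope.

(* T = K[X,Y] is modelled as {poly {poly K}}: the inner variable is X
   ('X%:P : {poly {poly K}}), the outer variable is Y ('X : {poly {poly K}}). *)

(* Generator of the ideal (X^(n-2) - Y^2) = (Y^2 - X^(n-2)); monic in Y. *)
Definition Srel (K : fieldType) (n : nat) : {poly {poly K}} :=
  'X^2 - ('X^(n - 2))%:P.

(* S = T / (X^(n-2) - Y^2), via the library quotient R[Y]/<h> for monic h. *)
Definition S (K : fieldType) (n : nat) := {poly %/ Srel K n}.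

Definition toS (K : fieldType) (n : nat) (t : {poly {poly K}}) : S K n :=
  in_qpoly (Srel K n) t.

(* t is homogeneous of degree d mod n for the Z/nZ-grading deg X = 1, deg Y = -1:
   every monomial X^a Y^b occurring in t satisfies a - b = d (mod n). *)
Definition T_homog (K : fieldType) (n : nat) (d : int) (t : {poly {poly K}}) : Prop :=
  forall a b : nat, (t`_b)`_a != 0 -> ((a%:Z - b%:Z - d) %% n%:Z)%Z = 0.

Definition S_homog (K : fieldType) (n : nat) (d : int) (s : S K n) : Prop :=
  exists2 t, T_homog n d t & toS n t = s.

Definition xS (K : fieldType) (n : nat) (p : {poly K}) : S K n :=
  toS n ((map_poly (fun c : K => c%:P%:P) p).[('X%:P) * 'X]).

Definition Sbr (K : fieldType) (n : nat) (A : 'M[S K n]_n) : Prop :=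
  forall i j : 'I_n, S_homog (j%:Z - i%:Z) (A i j).

(* exponents c_{ij}, with 0-based indices (paper's (1,n) is (0, n-1)) *)
Definition cexp (n : nat) (i j : 'I_n) : int :=
  if (i <= j)%N then (if (i == 0%N :> nat) && (j == n.-1 :> nat) then -1 else 0)
  else if (i == j.+1 :> nat) then 1 else 2.

Definition Lam (K : fieldType) (n : nat) (B : 'M[{fraction {poly K}}]_n) : Prop :=
  forall i j : 'I_n, exists q : {poly K},
    B i j = (('X : {poly K})%:F) ^ (cexp i j) * q%:F.

(* Send X to t^2 and Y to t^(n-2): this kills X^(n-2) - Y^2, so it defines a
   ring map S -> K[t] taking x = XY to t^n (it need not be injective on S).
   If d = D mod n with 0 <= D < n, the component S_d is spanned over R by the
   single element g_D = X^D, or g_D = Y when D = n - 1, whose image is t^w with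
   w = 2D, resp. w = n - 2; thus r(x) g_D maps to t^w r(t^n), which determines r.
   Sending an entry r_ij(x) g_(j-i) of a matrix of S^[n] to x^(c_ij) r_ij is
   then the isomorphism.  It is multiplicative because n c_ij = w_ij + 2i - 2j,
   so that g_(j-i) g_(k-j) = x^(c_ij + c_jk - c_ik) g_(k-i) in S. *)

From HB Require Import structures.
From mathcomp Require Import all_boot all_order all_algebra.
From mathcomp Require Import zify ring.
Set Implicit Arguments. Unset Strict Implicit. Unset Printing Implicit Defensive.
Import Order.TTheory GRing.Theory Num.Theory.
Local Open Scope ring_scope.

Section Decimate.
Variables (R : comNzRingType) (n : nat).
Hypothesis n_gt0 : (0 < n)%N.

Definition decimate (w : nat) (f : {poly R}) : {poly R} :=
  \poly_(k < size f) f`_(w + k * n).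

Lemma decimateK (w : nat) (r : {poly R}) : decimate w ('X^w * (r \Po 'X^n)) = r.
Proof.
set g := _ * _.
have coef_g k : g`_(w + k * n) = r`_k.
  rewrite coefXnM ltnNge leq_addr /= addKn coef_comp_poly_Xn //.
  by rewrite dvdn_mull // mulnK.
apply/polyP => k; rewrite coef_poly; case: ltnP => // size_g_le.
rewrite -coef_g !nth_default //.
by rewrite (leq_trans size_g_le) // (leq_trans (leq_pmulr k n_gt0)) ?leq_addl.
Qed.

End Decimate.

Section Indices.
Variable n : nat.

Definition gap (i j : nat) : nat := if (i <= j)%N then (j - i)%N else (j + n - i)%N.

Definition weight (D : nat) : nat := if D == n.-1 then (n - 2)%N else (2 * D)%N.

Definition defect (i j k : 'I_n) : nat := absz (cexp i j + cexp j k - cexp i k)%R.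

Lemma gap_lt (i j : 'I_n) : (gap i j < n)%N.
Proof. by have := ltn_ord i; have := ltn_ord j; rewrite /gap; case: ifP; lia. Qed.

Lemma gapE (i j : 'I_n) : (gap i j)%:Z = j%:Z - i%:Z + n%:Z * (j < i)%N%:Z.
Proof. by have := ltn_ord i; have := ltn_ord j; rewrite /gap; case: ifP; lia. Qed.

Lemma gapnn (i : nat) : gap i i = 0%N.
Proof. by rewrite /gap leqnn subnn. Qed.

Hypothesis n_ge3 : (3 <= n)%N.

Lemma cexpnn (i : 'I_n) : cexp i i = 0.
Proof. by rewrite /cexp leqnn; case: ifP => // /andP[/eqP ? /eqP ?]; lia. Qed.

Lemma cexp_weight (i j : 'I_n) :
  n%:Z * cexp i j = (weight (gap i j))%:Z + 2 * i%:Z - 2 * j%:Z.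
Proof.
have := ltn_ord i; have := ltn_ord j.
by rewrite /cexp /weight /gap; repeat case: ifP; lia.
Qed.

Lemma cexp_triangle (i j k : 'I_n) : cexp i k <= cexp i j + cexp j k.
Proof.
have := ltn_ord i; have := ltn_ord j; have := ltn_ord k.
by rewrite /cexp; repeat case: ifP; lia.
Qed.

Lemma cexp_defect (i j k : 'I_n) :
  cexp i j + cexp j k = cexp i k + (defect i j k)%:Z.
Proof. by rewrite /defect gez0_abs ?subr_ge0 ?cexp_triangle //; ring. Qed.

Lemma weight_defect (i j k : 'I_n) :
  (weight (gap i j) + weight (gap j k) = weight (gap i k) + defect i j k * n)%N.
Proof.
have := cexp_weight i j; have := cexp_weight j k; have := cexp_weight i k.
have := cexp_defect i j k; lia.
Qed.

End Indices.

Section Quotient.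
Variables (K : fieldType) (n : nat).
Hypothesis n_ge3 : (3 <= n)%N.

Local Notation T := {poly {poly K}}.

HB.instance Definition _ := GRing.RMorphism.copy (@toS K n) (in_qpoly (Srel K n)).

Lemma Srel_monic : Srel K n \is monic.
Proof. exact: monicXnsubC. Qed.

Lemma mk_monic_Srel : mk_monic (Srel K n) = Srel K n.
Proof. by rewrite /mk_monic Srel_monic /Srel size_XnsubC. Qed.

Lemma toS_val (s : S K n) : toS n (val s) = s.
Proof. by apply: val_inj; apply: in_qpoly_small; apply: size_mk_monic. Qed.

Lemma val_toS (p : T) :
  val (toS n p) = Pdiv.CommonRing.rmodp p (Srel K n).
Proof. by rewrite /= mk_monic_Srel. Qed.

Lemma toS_Srel : toS n (Srel K n) = 0.
Proof. by apply: val_inj; rewrite val_toS Pdiv.RingMonic.rmodpp // Srel_monic. Qed.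

Definition sX : S K n := toS n 'X%:P.
Definition sY : S K n := toS n 'X.

Lemma sY2 : sY ^+ 2 = sX ^+ (n - 2).
Proof.
by apply/eqP; rewrite -subr_eq0 -!rmorphXn -rmorphB; apply/eqP/toS_Srel.
Qed.

HB.instance Definition _ := GRing.RMorphism.copy (@xS K n)
  (@toS K n \o horner_eval ('X%:P * 'X) \o map_poly (polyC \o polyC)).

Lemma xSX : xS n 'X = sX * sY.
Proof. by rewrite /xS (map_polyX (polyC \o polyC)) hornerX rmorphM. Qed.

Lemma xSC (c : K) : xS n c%:P = toS n c%:P%:P.
Proof. by rewrite /xS (map_polyC (polyC \o polyC)) hornerC. Qed.

Lemma sX_exp_n : sX ^+ n = (sX * sY) ^+ 2.
Proof. by rewrite exprMn sY2 -exprD subnKC // ltnW. Qed.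

Lemma sX_exp_predn : sX ^+ n.-1 = sX * sY * sY.
Proof. by rewrite -mulrA -expr2 sY2 -exprS; congr (_ ^+ _); lia. Qed.

Definition sgen (D : nat) : S K n := if D == n.-1 then sY else sX ^+ D.

Lemma sgen0 : sgen 0 = 1.
Proof. by rewrite /sgen ifN ?expr0 // eq_sym -lt0n -subn1 subn_gt0 ltnW. Qed.

Lemma monomial_sgen (D a e : nat) : (D < n)%N -> (e <= 1)%N ->
  (a %% n = (D + e) %% n)%N ->
  exists k, sX ^+ a * sY ^+ e = (sX * sY) ^+ k * sgen D.
Proof.
move=> ltDn le_e1 a_mod; rewrite (divn_eq a n) exprD mulnC exprM sX_exp_n -exprM.
rewrite -mulrA /sgen; case: eqP => [DE|D_neq]; case: e le_e1 a_mod => [|[|//]] _.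
- have -> : ((D + 0) %% n = n.-1)%N by rewrite addn0 modn_small.
  move=> ->; exists (2 * (a %/ n)).+1.
  by rewrite expr0 mulr1 sX_exp_predn exprS; ring.
- have -> : ((D + 1) %% n = 0)%N by rewrite DE addn1 prednK ?modnn //; lia.
  by move=> ->; exists (2 * (a %/ n))%N; rewrite expr0 mul1r.
- rewrite addn0 (modn_small ltDn) => ->.
  by exists (2 * (a %/ n))%N; rewrite expr0 mulr1.
- have -> : ((D + 1) %% n = D.+1)%N by rewrite modn_small; lia.
  by move=> ->; exists (2 * (a %/ n)).+1; rewrite !exprS; ring.
Qed.

Lemma toS_expand (p : T) : toS n p =
  \sum_(b < size p) \sum_(a < size p`_b) xS n (p`_b`_a)%:P * sX ^+ a * sY ^+ b.
Proof.
rewrite -{1}[p]coefK poly_def rmorph_sum; apply: eq_bigr => b _.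
rewrite -mul_polyC rmorphM rmorphXn -big_distrl /=; congr (_ * _).
rewrite -{1}[p`_b]coefK poly_def !rmorph_sum; apply: eq_bigr => a _.
by rewrite -mul_polyC !rmorphM !rmorphXn xSC.
Qed.

Lemma sY_exp (b : nat) : sY ^+ b = sX ^+ ((n - 2) * b./2) * sY ^+ odd b.
Proof.
by rewrite -{1}(odd_double_half b) -muln2 exprD mulnC exprM sY2 -exprM mulrC.
Qed.

End Quotient.

Section HomogeneousT.
Variables (K : fieldType) (n : nat).

Local Notation T := {poly {poly K}}.

Lemma T_homogP (d : int) (p : T) : T_homog n d p <->
  forall a b : nat, (p`_b)`_a != 0 -> (n%:Z %| a%:Z - b%:Z - d)%Z.
Proof. by split=> hp a b /hp /dvdz_mod0P. Qed.

Lemma T_homog_cong (d d' : int) (p : T) :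
  (n%:Z %| d - d')%Z -> T_homog n d p -> T_homog n d' p.
Proof.
move=> dd' /T_homogP hp; apply/T_homogP => a b /hp hab.
have -> : a%:Z - b%:Z - d' = (a%:Z - b%:Z - d) + (d - d') by ring.
exact: rpredD.
Qed.

Lemma T_homog0 (d : int) : T_homog n d (0 : T).
Proof. by move=> a b; rewrite !coef0 eqxx. Qed.

Lemma T_homogD (d : int) (p q : T) :
  T_homog n d p -> T_homog n d q -> T_homog n d (p + q).
Proof.
move=> hp hq a b; rewrite !coefD.
by have [/eqP pba|/hp //] := boolP (p`_b`_a == 0); rewrite pba add0r => /hq.
Qed.

Lemma T_homog_sum (d : int) (I : Type) (r : seq I) (F : I -> T) :
  (forall i, T_homog n d (F i)) -> T_homog n d (\sum_(i <- r) F i).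
Proof. by move=> hF; apply: big_ind => //; [apply: T_homog0 | apply: T_homogD]. Qed.

Lemma T_homogM (d e : int) (p q : T) :
  T_homog n d p -> T_homog n e q -> T_homog n (d + e) (p * q).
Proof.
move=> /T_homogP hp /T_homogP hq; apply/T_homogP => a b; apply: contraTT => bad.
rewrite negbK coefM coef_sum big1 // => l _; rewrite coefM big1 // => m _.
apply: contraNeq bad; rewrite mulf_eq0 negb_or => /andP[/hp hpl /hq hqm].
have -> : a%:Z - b%:Z - (d + e) =
  (m%:Z - l%:Z - d) + ((a - m)%N%:Z - (b - l)%N%:Z - e).
  by have := ltn_ord l; have := ltn_ord m; lia.
by rewrite rpredD.
Qed.

Lemma T_homogC (c : K) : T_homog n 0 (c%:P%:P : T).
Proof.
apply/T_homogP => a b; rewrite coefC; case: b => [|b]; last by rewrite coef0 eqxx.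
by rewrite coefC; case: a => [|a] /=; rewrite ?eqxx ?dvdzE.
Qed.

Lemma T_homogX (d : int) (k : nat) (p : T) :
  T_homog n d p -> T_homog n (d * k%:Z) (p ^+ k).
Proof.
move=> hp; elim: k => [|k IHk].
  by rewrite expr0 mulr0; have := T_homogC (c := 1); rewrite !polyC1.
by rewrite exprSr intS mulrDr mulr1 addrC; apply: T_homogM.
Qed.

Lemma T_homog_varX : T_homog n 1 ('X%:P : T).
Proof.
apply/T_homogP => a b; rewrite coefC; case: b => [|b]; last by rewrite coef0 eqxx.
by rewrite coefX; case: a => [|[|a]] /=; rewrite ?eqxx ?dvdzE.
Qed.

Lemma T_homog_varY : T_homog n (-1) ('X : T).
Proof.
apply/T_homogP => a b; rewrite coefX; case: b => [|[|b]] //=; rewrite ?coef0 ?eqxx //.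
by rewrite coefC; case: a => [|a] /=; rewrite ?eqxx ?dvdzE.
Qed.

End HomogeneousT.

Section HomogeneousS.
Variables (K : fieldType) (n : nat).
Hypothesis n_ge3 : (3 <= n)%N.

Local Notation T := {poly {poly K}}.
Local Notation sX := (sX K n).
Local Notation sY := (sY K n).

Lemma S_homog_cong (d d' : int) (s : S K n) :
  (n%:Z %| d - d')%Z -> S_homog d s -> S_homog d' s.
Proof. by move=> dd' [p hp <-]; exists p => //; apply: T_homog_cong hp. Qed.

Lemma S_homogM (d e : int) (s t : S K n) :
  S_homog d s -> S_homog e t -> S_homog (d + e) (s * t).
Proof.
by move=> [p hp <-] [q hq <-]; exists (p * q); [apply: T_homogM | rewrite rmorphM].
Qed.

Lemma S_homog_xS (q : {poly K}) : S_homog 0 (xS n q).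
Proof.
exists ((map_poly (polyC \o polyC) q).[('X%:P * 'X : T)]) => //.
rewrite horner_coef; apply: T_homog_sum => i; rewrite coef_map /=.
rewrite -[0]addr0 -{2}(mul0r i%:Z) -(addrN 1).
apply: T_homogM; first exact: T_homogC.
by apply: T_homogX; apply: T_homogM; [apply: T_homog_varX | apply: T_homog_varY].
Qed.

Lemma S_homog_sgen (D : nat) : S_homog D%:Z (sgen K n D).
Proof.
rewrite /sgen; case: eqP => [->|_].
  apply: S_homog_cong (_ : S_homog (-1) _).
    have -> : -1 - (n.-1)%:Z = - n%:Z by rewrite -subn1; lia.
    by rewrite rpredN dvdzz.
  by exists 'X => //; apply: T_homog_varY.
exists ('X%:P ^+ D); last by rewrite rmorphXn.
by rewrite -[D%:Z]mul1r; apply: T_homogX; apply: T_homog_varX.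
Qed.

Lemma S_homog_sgen_span (d : int) (D : nat) (s : S K n) :
  (D < n)%N -> (n%:Z %| d - D%:Z)%Z -> S_homog d s ->
  exists r, s = xS n r * sgen K n D.
Proof.
move=> ltDn dD [p /T_homogP hp <-]; rewrite toS_expand.
pose spanned s := exists r, s = xS n r * sgen K n D.
have span0 : spanned 0 by exists 0; rewrite rmorph0 mul0r.
have spanD x y : spanned x -> spanned y -> spanned (x + y).
  by move=> [r1 ->] [r2 ->]; exists (r1 + r2); rewrite rmorphD mulrDl.
apply: (big_ind spanned) => // b _; apply: (big_ind spanned) => // a _.
have [->|/hp abd] := eqVneq p`_b`_a 0; first by exists 0; rewrite !rmorph0 !mul0r.
have a_mod : ((a + (n - 2) * b./2) %% n = (D + odd b) %% n)%N.
  apply/eqP; rewrite -(eqz_nat) -!modz_nat eqz_mod_dvd.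
  have -> : (a + (n - 2) * b./2)%N%:Z - (D + odd b)%N%:Z =
            (a%:Z - b%:Z - d) + (d - D%:Z) + n%:Z * (b./2)%:Z.
    by have := odd_double_half b; lia.
  exact: rpredD (rpredD abd dD) (dvdz_mulr _ (dvdzz _)).
have [k hk] := monomial_sgen K n_ge3 ltDn (leq_b1 (odd b)) a_mod.
exists ((p`_b`_a)%:P * 'X^k).
rewrite -mulrA sY_exp (mulrA (sX ^+ a)) -exprD hk.
by rewrite -xSX -rmorphXn mulrA -rmorphM.
Qed.

End HomogeneousS.

Section Evaluation.
Variables (K : fieldType) (n : nat).
Hypothesis n_ge3 : (3 <= n)%N.

Local Notation T := {poly {poly K}}.

Definition evalT : {rmorphism T -> {poly K}} :=
  horner_eval 'X^(n - 2) \o map_poly (comp_poly 'X^2).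

Lemma evalTC (c : {poly K}) : evalT c%:P = c \Po 'X^2.
Proof. by rewrite /= map_polyC /horner_eval hornerC. Qed.

Lemma evalTX : evalT 'X = 'X^(n - 2).
Proof. by rewrite /= map_polyX /horner_eval hornerX. Qed.

Lemma evalT_Srel : evalT (Srel K n) = 0.
Proof.
by rewrite rmorphB rmorphXn evalTC evalTX comp_Xn_poly -!exprM mulnC subrr.
Qed.

Definition evalS (s : S K n) : {poly K} := evalT (val s).

Lemma evalS_toS (p : T) : evalS (toS n p) = evalT p.
Proof.
rewrite /evalS val_toS [in RHS](Pdiv.RingMonic.rdivp_eq (Srel_monic K n) p).
by rewrite rmorphD rmorphM evalT_Srel mulr0 add0r.
Qed.

Fact evalS_is_zmod_morphism : zmod_morphism evalS.
Proof. by move=> s t; rewrite /evalS !raddfB. Qed.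

Fact evalS_is_monoid_morphism : monoid_morphism evalS.
Proof.
split; first by rewrite -(rmorph1 (@toS K n)) evalS_toS rmorph1.
by move=> s t; rewrite -{1}[s]toS_val -{1}[t]toS_val -rmorphM evalS_toS rmorphM.
Qed.

HB.instance Definition _ :=
  GRing.isZmodMorphism.Build (S K n) {poly K} evalS evalS_is_zmod_morphism.
HB.instance Definition _ :=
  GRing.isMonoidMorphism.Build (S K n) {poly K} evalS evalS_is_monoid_morphism.

Lemma evalS_sX : evalS (sX K n) = 'X^2.
Proof. by rewrite evalS_toS evalTC comp_polyX. Qed.

Lemma evalS_sY : evalS (sY K n) = 'X^(n - 2).
Proof. by rewrite evalS_toS evalTX. Qed.

Lemma evalS_xS (r : {poly K}) : evalS (xS n r) = r \Po 'X^n.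
Proof.
elim/poly_ind: r => [|r c IHr]; first by rewrite !rmorph0.
rewrite !rmorphD !rmorphM /= IHr xSX xSC rmorphM /=.
rewrite evalS_sX evalS_sY evalS_toS evalTC.
by rewrite comp_polyX !comp_polyC -exprD subnKC //; apply: ltnW.
Qed.

End Evaluation.

Section Coordinates.
Variables (K : fieldType) (n : nat).
Hypothesis n_ge3 : (3 <= n)%N.

Local Notation F := {fraction {poly K}}.
Local Notation xF := (('X : {poly K})%:F).
Local Notation w i j := (weight n (gap n i j)).

Let n_gt0 : (0 < n)%N. Proof. exact: ltn_trans n_ge3. Qed.

Definition gen (i j : 'I_n) : S K n := sgen K n (gap n i j).

Definition coord (i j : 'I_n) (s : S K n) : {poly K} :=
  decimate n (w i j) (evalS s).

Lemma evalS_gen (i j : 'I_n) : evalS (gen i j) = 'X^(w i j).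
Proof.
rewrite /gen /sgen /weight; case: eqP => _; first exact: evalS_sY.
by rewrite rmorphXn /= evalS_sX -exprM.
Qed.

Lemma coord_xS_gen (i j : 'I_n) (r : {poly K}) :
  coord i j (xS n r * gen i j) = r.
Proof. by rewrite /coord rmorphM /= evalS_xS // evalS_gen mulrC decimateK. Qed.

Lemma S_homog_gen (i j : 'I_n) : S_homog (j%:Z - i%:Z) (gen i j).
Proof.
apply: S_homog_cong (S_homog_sgen K n_ge3 _); rewrite gapE addrAC subrr add0r.
exact/dvdz_mulr/dvdzz.
Qed.

Lemma gen_span (i j : 'I_n) (s : S K n) :
  S_homog (j%:Z - i%:Z) s -> exists r, s = xS n r * gen i j.
Proof.
move=> hs; apply: (S_homog_sgen_span n_ge3 (gap_lt i j) _ hs).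
by rewrite gapE opprD addrA subrr sub0r rpredN; apply/dvdz_mulr/dvdzz.
Qed.

Lemma gen_mul (i j k : 'I_n) :
  gen i j * gen j k = xS n 'X^(defect i j k) * gen i k.
Proof.
have [r uuE] : exists r, gen i j * gen j k = xS n r * gen i k.
  apply: gen_span; rewrite (_ : _ - _ = (j%:Z - i%:Z) + (k%:Z - j%:Z)); last by ring.
  exact: S_homogM (S_homog_gen i j) (S_homog_gen j k).
rewrite uuE -[r](coord_xS_gen i k) -uuE /coord rmorphM /= !evalS_gen -exprD.
rewrite weight_defect // exprD mulnC exprM -[_ ^+ defect i j k]comp_Xn_poly.
by rewrite decimateK.
Qed.

Definition Sbr_mx (r : 'M[{poly K}]_n) : 'M[S K n]_n :=
  \matrix_(i, j) (xS n (r i j) * gen i j).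

Definition Lam_mx (r : 'M[{poly K}]_n) : 'M[F]_n :=
  \matrix_(i, j) (xF ^ cexp i j * (r i j)%:F).

Definition twisted_mulmx (r r' : 'M[{poly K}]_n) : 'M[{poly K}]_n :=
  \matrix_(i, k) \sum_j 'X^(defect i j k) * r i j * r' j k.

Definition phi (A : 'M[S K n]_n) : 'M[F]_n :=
  Lam_mx (\matrix_(i, j) coord i j (A i j)).

Lemma phi_Sbr_mx (r : 'M[{poly K}]_n) : phi (Sbr_mx r) = Lam_mx r.
Proof. by congr Lam_mx; apply/matrixP => i j; rewrite !mxE coord_xS_gen. Qed.

Lemma Sbr_Sbr_mx (r : 'M[{poly K}]_n) : Sbr (Sbr_mx r).
Proof.
move=> i j; rewrite mxE -[_ - _]add0r.
exact: S_homogM (S_homog_xS n _) (S_homog_gen i j).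
Qed.

Lemma SbrP (A : 'M[S K n]_n) : Sbr A -> exists r, A = Sbr_mx r.
Proof.
move=> hA; have /fin_all_exists[r hr] : forall i, exists ri : 'I_n -> {poly K},
    forall j, A i j = xS n (ri j) * gen i j.
  by move=> i; exact: fin_all_exists (fun j => gen_span (hA i j)).
by exists (\matrix_(i, j) r i j); apply/matrixP => i j; rewrite !mxE hr.
Qed.

Lemma Lam_Lam_mx (r : 'M[{poly K}]_n) : Lam (Lam_mx r).
Proof. by move=> i j; exists (r i j); rewrite mxE. Qed.

Lemma LamP (B : 'M[F]_n) : Lam B -> exists r, B = Lam_mx r.
Proof.
move=> hB; have /fin_all_exists[r hr] : forall i, exists ri : 'I_n -> {poly K},
    forall j, B i j = xF ^ cexp i j * (ri j)%:F.
  by move=> i; exact: fin_all_exists (hB i).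
by exists (\matrix_(i, j) r i j); apply/matrixP => i j; rewrite !mxE hr.
Qed.

Lemma xF_neq0 : xF != 0.
Proof. by rewrite tofrac_eq0 polyX_eq0. Qed.

Lemma Lam_mx_inj : injective Lam_mx.
Proof.
move=> r r' /matrixP rr'; apply/matrixP => i j; have := rr' i j; rewrite !mxE.
by move/(mulfI (expfz_neq0 _ xF_neq0))/eqP; rewrite tofrac_eq => /eqP.
Qed.

Lemma Sbr_mxD (r r' : 'M[{poly K}]_n) : Sbr_mx (r + r') = Sbr_mx r + Sbr_mx r'.
Proof. by apply/matrixP => i j; rewrite !mxE rmorphD mulrDl. Qed.

Lemma Lam_mxD (r r' : 'M[{poly K}]_n) : Lam_mx (r + r') = Lam_mx r + Lam_mx r'.
Proof. by apply/matrixP => i j; rewrite !mxE rmorphD mulrDr. Qed.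

Lemma Sbr_mxZ (p : {poly K}) (r : 'M[{poly K}]_n) :
  Sbr_mx (p *: r) = xS n p *: Sbr_mx r.
Proof. by apply/matrixP => i j; rewrite !mxE rmorphM mulrA. Qed.

Lemma Lam_mxZ (p : {poly K}) (r : 'M[{poly K}]_n) :
  Lam_mx (p *: r) = p%:F *: Lam_mx r.
Proof. by apply/matrixP => i j; rewrite !mxE rmorphM mulrCA. Qed.

Lemma Sbr_mx1 : Sbr_mx 1%:M = 1%:M.
Proof.
apply/matrixP => i j; rewrite !mxE; case: eqP => [->|_]; last by rewrite rmorph0 mul0r.
by rewrite rmorph1 mul1r /gen gapnn sgen0.
Qed.

Lemma Lam_mx1 : Lam_mx 1%:M = 1%:M.
Proof.
apply/matrixP => i j; rewrite !mxE; case: eqP => [->|_]; last by rewrite rmorph0 mulr0.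
by rewrite cexpnn // expr0z rmorph1 mulr1.
Qed.

Lemma Sbr_mxM (r r' : 'M[{poly K}]_n) :
  Sbr_mx (twisted_mulmx r r') = Sbr_mx r *m Sbr_mx r'.
Proof.
apply/matrixP => i k; rewrite !mxE rmorph_sum mulr_suml; apply: eq_bigr => j _.
by rewrite !mxE !rmorphM [RHS]mulrACA gen_mul; ring.
Qed.

Lemma Lam_mxM (r r' : 'M[{poly K}]_n) :
  Lam_mx (twisted_mulmx r r') = Lam_mx r *m Lam_mx r'.
Proof.
apply/matrixP => i k; rewrite !mxE rmorph_sum mulr_sumr; apply: eq_bigr => j _.
have xE : xF ^ cexp i j * xF ^ cexp j k = xF ^ cexp i k * xF ^+ defect i j k.
  by rewrite -expfzDr ?xF_neq0 // cexp_defect // expfzDr ?xF_neq0.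
by rewrite !mxE !rmorphM rmorphXn /= [RHS]mulrACA xE; ring.
Qed.

End Coordinates.

Theorem proposition3p24 (K : fieldType) (n : nat) (hn : (3 <= n)%N) :
  exists phi : 'M[S K n]_n -> 'M[{fraction {poly K}}]_n,
    (forall A, Sbr A -> Lam (phi A)) /\
    (forall A B, Sbr A -> Sbr B -> phi A = phi B -> A = B) /\
    (forall B, Lam B -> exists2 A, Sbr A & phi A = B) /\
    (forall A B, Sbr A -> Sbr B -> phi (A + B) = phi A + phi B) /\
    (forall A B, Sbr A -> Sbr B -> phi (A *m B) = phi A *m phi B) /\
    phi 1%:M = 1%:M /\
    (forall (p : {poly K}) A, Sbr A -> phi (xS n p *: A) = (p%:F) *: phi A).
Proof.
have SbrE := @SbrP K n hn; have phiE := @phi_Sbr_mx K n hn.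
exists (@phi K n).
split=> [A /SbrE[r ->]|]; first by rewrite phiE; apply: Lam_Lam_mx.
split=> [A B /SbrE[r ->] /SbrE[r' ->]|]; first by rewrite !phiE => /Lam_mx_inj ->.
split=> [B /LamP[r ->]|].
  by exists (Sbr_mx r); [apply: Sbr_Sbr_mx | apply: phiE].
split=> [A B /SbrE[r ->] /SbrE[r' ->]|]; first by rewrite -Sbr_mxD !phiE Lam_mxD.
split=> [A B /SbrE[r ->] /SbrE[r' ->]|]; first by rewrite -Sbr_mxM // !phiE Lam_mxM.
split; first by rewrite -Sbr_mx1 // phiE Lam_mx1.
by move=> p A /SbrE[r ->]; rewrite -Sbr_mxZ !phiE Lam_mxZ.
Qed.
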